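(* Let $f:\mathcal{X}\times\mathcal{Y}\to\mathcal{V}=\{0,1,\dots,m-1\}$ and define $f_n^{\mathsf t}:\mathcal{X}^n\times\mathcal{Y}^n\to\mathcal{P}_n(\mathcal{V})$ by $f_n^{\mathsf t}(\mathbf{x},\mathbf{y})=P_{(f(x_1,y_1),\dots,f(x_n,y_n))}$ (the type of the sequence of symbol-wise values). Define $\hat f^{\mathsf t}:\mathcal{X}\times\mathcal{Y}\to\mathcal{V}\cup\{m\}$ by $\hat f^{\mathsf t}(x,y)=m$ if $f(x,\cdot)$ is constant on $\mathcal{Y}$, and $\hat f^{\mathsf t}(x,y)=f(x,y)$ otherwise. Then $f_n^{\mathsf t}$ is $\overline{\mathcal{X}}_{\hat f^{\mathsf t}}$-informative.
   Context: Finite alphabets $\mathcal{X},\mathcal{Y}$. The type of $\mathbf{s}\in\mathcal{S}^n$ is $P_{\mathbf{s}}(s)=|\{i:s_i=s\}|/n$; $\mathcal{P}_n(\mathcal{S})$ is the set of types of sequences in $\mathcal{S}^n$. For a function $g$ on $\mathcal{X}\times\mathcal{Y}$, $\overline{\mathcal{X}}_g$ is the partition of $\mathcal{X}$ in which $x,\hat x$ lie in the same cell iff $g(x,y)=g(\hat x,y)$ for all $y$. For a partition $\overline{\mathcal{X}}$ and $x\in\mathcal{X}$, $[x]_{\overline{\mathcal{X}}}$ is the cell containing $x$; $[\mathbf{x}]_{\overline{\mathcal{X}}}$ is applied componentwise. For $a\in\mathcal{X}$, $a\mathbf{x}^{(-i)}$ is $\mathbf{x}$ with its $i$th entry replaced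 by $a$; similarly $b\mathbf{y}^{(-i)}$. For a permutation $\sigma$ of $[1:n]$, $\sigma(\mathbf{x})$ has $i$th entry $x_{\sigma(i)}$. $f_n:\mathcal{X}^n\times\mathcal{Y}^n\to\mathcal{Z}_n$ is $\overline{\mathcal{X}}$-informative if (1) for each $i\in[1:n]$ there is a map $\xi_n^{(i)}:\mathcal{Z}_n^{|\mathcal{Y}|}\to\overline{\mathcal{X}}$ with $\xi_n^{(i)}\big((f_n(a\mathbf{x}^{(-i)},b\mathbf{y}^{(-i)}):b\in\mathcal{Y})\big)=[a]_{\overline{\mathcal{X}}}$ for all $a\in\mathcal{X}$, $(\mathbf{x},\mathbf{y})$; and (2) $f_n(\sigma(\mathbf{x}),\mathbf{y})=f_n(\mathbf{x},\mathbf{y})$ for all $(\mathbf{x},\mathbf{y})$ and all permutations $\sigma$ with $[\sigma(\mathbf{x})]_{\overline{\mathcal{X}}}=[\mathbf{x}]_{\overline{\mathcal{X}}}$. *)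

From HB Require Import structures.
From mathcomp Require Import all_boot all_order all_algebra all_fingroup.
Set Implicit Arguments. Unset Strict Implicit. Unset Printing Implicit Defensive.
Import GRing.Theory Num.Theory.

Definition type_of (V : finType) (n : nat) (s : 'I_n -> V) : {ffun V -> rat} :=
  [ffun v => (#|[set i | s i == v]|%:R / n%:R)%R].

Definition seq_eval (X Y V : Type) (n : nat) (g : X -> Y -> V)
  (x : {ffun 'I_n -> X}) (y : {ffun 'I_n -> Y}) : 'I_n -> V :=
  fun i => g (x i) (y i).

Definition fnt (X Y : finType) (m n : nat) (f : X -> Y -> 'I_m)
  (x : {ffun 'I_n -> X}) (y : {ffun 'I_n -> Y}) : {ffun 'I_m -> rat} :=
  type_of (seq_eval f x y).

Definition fhat (X Y : finType) (m : nat) (f : X -> Y -> 'I_m) (x : X) (y : Y) : 'I_m.+1 :=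
  if [forall y1 : Y, forall y2 : Y, f x y1 == f x y2] then ord_max
  else widen_ord (leqnSn m) (f x y).

(* Partition Xbar_g: x, x' in the same cell iff g(x,y) = g(x',y) for all y.
   cell g a = [a]_{Xbar_g}, the cell containing a. *)
Definition cell (X Y : finType) (W : eqType) (g : X -> Y -> W) (a : X) : {set X} :=
  [set x' | [forall y : Y, g a y == g x' y]].

Definition upd (T : Type) (n : nat) (x : {ffun 'I_n -> T}) (i : 'I_n) (a : T)
  : {ffun 'I_n -> T} := [ffun j => if j == i then a else x j].

Definition permseq (T : Type) (n : nat) (s : 'S_n) (x : {ffun 'I_n -> T})
  : {ffun 'I_n -> T} := [ffun i => x (s i)].

(* f_n is Xbar-informative, where the partition Xbar is given by its cell map
   cl : X -> {set X}, a |-> [a]_{Xbar}. *)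
Definition informative (X Y : finType) (Z : eqType) (n : nat)
  (fn : {ffun 'I_n -> X} -> {ffun 'I_n -> Y} -> Z) (cl : X -> {set X}) : Prop :=
  (forall i : 'I_n, exists xi : {ffun Y -> Z} -> {set X},
      forall (a : X) (x : {ffun 'I_n -> X}) (y : {ffun 'I_n -> Y}),
        xi [ffun b => fn (upd x i a) (upd y i b)] = cl a)
  /\
  (forall (x : {ffun 'I_n -> X}) (y : {ffun 'I_n -> Y}) (s : 'S_n),
      (forall i : 'I_n, cl (permseq s x i) = cl (x i)) ->
      fn (permseq s x) y = fn x y).

From HB Require Import structures.
From mathcomp Require Import all_boot all_order all_algebra all_fingroup.
Set Implicit Arguments. Unset Strict Implicit. Unset Printing Implicit Defensive.
Import GRing.Theory Num.Theory.

(* Changing the i-th entry of y from b' to b raises the frequency of v exactly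
   when f(a,b) = v <> f(a,b'); from these comparisons one reads off f(a,.) when
   it is not constant and detects when it is, i.e. one recovers fhat(a,.).
   A permutation s preserving the cells of fhat maps each row f(x_i,.) either
   to the same row, or, if it is constant, to another constant row; in the
   latter case f(x_(s i), y_i) = f(x_(s i), y_(s i)), so the permuted value
   sequence is the original one reindexed by the injection
   i |-> (s i if f(x_i,.) is constant, else i). *)

Section TypeOf.

Variables (X Y V : finType) (n : nat) (g : X -> Y -> V).

Lemma card_seq_eval_upd (x : {ffun 'I_n -> X}) (y : {ffun 'I_n -> Y})
    (i : 'I_n) (a : X) (b : Y) (v : V) :
  #|[set j | seq_eval g (upd x i a) (upd y i b) j == v]| =
  ((g a b == v) + #|[set j | (j != i) && (g (x j) (y j) == v)]|)%N.
Proof.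
rewrite (cardsD1 i) !inE /seq_eval !ffunE eqxx; congr (_ + _)%N.
by apply: eq_card => j; rewrite !inE /seq_eval !ffunE; case: (j =P i).
Qed.

Lemma type_of_upd_lt (x : {ffun 'I_n -> X}) (y : {ffun 'I_n -> Y})
    (i : 'I_n) (a : X) (b b' : Y) (v : V) :
  (type_of (seq_eval g (upd x i a) (upd y i b')) v <
   type_of (seq_eval g (upd x i a) (upd y i b)) v)%R =
  (g a b == v) && (g a b' != v).
Proof.
have n_gt0 : (0 < n)%N by apply: leq_ltn_trans (ltn_ord i).
rewrite /type_of !ffunE !card_seq_eval_upd.
rewrite ltr_pM2r ?invr_gt0 ?ltr0n // ltr_nat ltn_add2r.
by case: (g a b == v); case: (g a b' == v).
Qed.

Lemma type_of_reindex (s s' : 'I_n -> V) (t : 'I_n -> 'I_n) :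
  injective t -> s' =1 s \o t -> type_of s' = type_of s.
Proof.
move=> t_inj eq_s'; apply/ffunP => v; rewrite !ffunE; congr (_%:R / _)%R.
by rewrite -[RHS](card_preimset _ t_inj); apply: eq_card => j; rewrite !inE eq_s'.
Qed.

End TypeOf.

Section Fhat.

Variables (X Y : finType) (m : nat) (f : X -> Y -> 'I_m).

Definition const_row (a : X) : bool := [forall y1, forall y2, f a y1 == f a y2].

Lemma fhatE (a : X) (y : Y) :
  fhat f a y = if const_row a then ord_max else widen_ord (leqnSn m) (f a y).
Proof. by []. Qed.

Lemma eq_cell_fhat (a a' : X) :
  cell (fhat f) a = cell (fhat f) a' -> fhat f a =1 fhat f a'.
Proof.
move=> eq_cell y.
have : a' \in cell (fhat f) a by rewrite eq_cell inE; apply/forallP.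
by rewrite inE => /forallP /(_ y) /eqP.
Qed.

Lemma fhat_eq_const_row (a a' : X) :
  fhat f a =1 fhat f a' -> const_row a = const_row a'.
Proof.
move=> eq_fhat; have [y0 _ | Y0] := pickP (fun _ : Y => true); last first.
  have const_empty b : const_row b by apply/forallP => y1; have := Y0 y1.
  by rewrite !const_empty.
move: (eq_fhat y0); rewrite !fhatE.
case: (const_row a); case: (const_row a') => // /(congr1 val) /= E.
- by have := ltn_ord (f a' y0); rewrite -E ltnn.
- by have := ltn_ord (f a y0); rewrite E ltnn.
Qed.

Lemma fhat_eq_nonconst (a a' : X) :
  fhat f a =1 fhat f a' -> ~~ const_row a -> f a =1 f a'.
Proof.
move=> eq_fhat /negbTE nconst y; apply: val_inj.
move: (eq_fhat y); rewrite !fhatE -(fhat_eq_const_row eq_fhat) nconst.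
by move/(congr1 val).
Qed.

Definition decode_fhat (lt : Y -> Y -> 'I_m -> bool) (b : Y) : 'I_m.+1 :=
  if [pick v | [exists b', lt b' b v]] is Some v then widen_ord (leqnSn m) v
  else ord_max.

Lemma decode_fhatE (a : X) (lt : Y -> Y -> 'I_m -> bool) :
  (forall b b' v, lt b' b v = (f a b == v) && (f a b' != v)) ->
  decode_fhat lt =1 fhat f a.
Proof.
move=> ltE b; rewrite /decode_fhat fhatE.
case: pickP => [v /existsP [b' ltb'b] | no_lt].
  move: ltb'b; rewrite ltE => /andP [/eqP <- neq_b'].
  suff /negbTE -> : ~~ const_row a by [].
  by apply/forallP => /(_ b) /forallP /(_ b'); rewrite eq_sym (negbTE neq_b').
suff -> : const_row a by [].
have eq_b y1 : f a y1 = f a b.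
  apply/eqP; rewrite eq_sym; apply: contraFT (no_lt (f a b)) => neq.
  by apply/existsP; exists y1; rewrite ltE eqxx eq_sym.
by apply/forallP => y1; apply/forallP => y2; rewrite !eq_b.
Qed.

End Fhat.

Section Informative.

Variables (X Y : finType) (m : nat) (f : X -> Y -> 'I_m) (n : nat).

Lemma fnt_cell_decodable (i : 'I_n) :
  exists xi : {ffun Y -> {ffun 'I_m -> rat}} -> {set X},
    forall a x y, xi [ffun b => fnt f (upd x i a) (upd y i b)] = cell (fhat f) a.
Proof.
pose lt_at (F : {ffun Y -> {ffun 'I_m -> rat}}) b' b v := (F b' v < F b v)%R.
exists (fun F => [set a' | [forall y, decode_fhat (lt_at F) y == fhat f a' y]]).
move=> a x y; apply/setP => a'; rewrite !inE; apply: eq_forallb => b.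
rewrite (decode_fhatE (f := f) (a := a)) // => {}b b' v.
by rewrite /lt_at !(ffunE (fun b => fnt f _ (upd y i b))) type_of_upd_lt.
Qed.

Lemma fnt_permseq (x : {ffun 'I_n -> X}) (y : {ffun 'I_n -> Y}) (s : 'S_n) :
  (forall i, cell (fhat f) (permseq s x i) = cell (fhat f) (x i)) ->
  fnt f (permseq s x) y = fnt f x y.
Proof.
move=> eq_cells.
have eq_fhat i : fhat f (x (s i)) =1 fhat f (x i).
  by apply: eq_cell_fhat; rewrite -(eq_cells i) /permseq ffunE.
have eq_const i : const_row f (x (s i)) = const_row f (x i).
  exact: fhat_eq_const_row (eq_fhat i).
pose t i := if const_row f (x i) then s i else i.
have t_inj : injective t.
  move=> i j; rewrite /t.
  case Ci: (const_row f (x i)); case Cj: (const_row f (x j)) => //.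
  - exact: perm_inj.
  - by move=> E; move: Cj; rewrite -E eq_const Ci.
  - by move=> E; move: Ci; rewrite E eq_const Cj.
apply: (type_of_reindex t_inj) => i; rewrite /seq_eval /permseq ffunE /= /t.
case Ci: (const_row f (x i)).
  by move: Ci; rewrite -eq_const => /forallP /(_ (y i)) /forallP /(_ (y (s i))) /eqP.
by rewrite (fhat_eq_nonconst (eq_fhat i)) // eq_const Ci.
Qed.

End Informative.

Theorem proposition3 (X Y : finType) (m : nat) (f : X -> Y -> 'I_m) (n : nat) :
  informative (@fnt X Y m n f) (cell (fhat f)).
Proof. by split; [exact: fnt_cell_decodable | exact: fnt_permseq]. Qed.
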